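(* Let $\omega$ be a nondegenerate skew-symmetric $2$-cocycle on a Leibniz algebra $(A,\circ_A)$, and define multiplications $\succ_A,\prec_A$ on $A$ by $$\omega(x\succ_A y,z)=\omega(y,x\circ_A z),\qquad \omega(x\prec_A y,z)=-\omega(x,y\circ_A z+z\circ_A y),\quad\forall x,y,z\in A.$$ Then $(A,\succ_A,\prec_A)$ is an anti-pre-Leibniz algebra (with $x\succ_A y+x\prec_A y=x\circ_A y$). Moreover, $(-\mathcal L_{\succ_A},-\mathcal R_{\prec_A},A)$ and $(\mathcal L^*_{\circ_A},-\mathcal L^*_{\circ_A}-\mathcal R^*_{\circ_A},A^* )$ are equivalent representations of $(A,\circ_A)$ (via $\omega^\natural$), and $(\mathcal L_{\circ_A},\mathcal R_{\circ_A},A)$ and $(-\mathcal L^*_{\succ_A},\mathcal L^*_{\succ_A}+\mathcal R^*_{\prec_A},A^* )$ are equivalent representations of $(A,\circ_A)$ (via $(\omega^\natural)^*$).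
   Context: All vector spaces are finite-dimensional over a field $\mathbb K$ of characteristic zero. For a multiplication $\ast$, $\mathcal L_\ast(x)y=x\ast y$, $\mathcal R_\ast(x)y=y\ast x$; for $f:A\to\mathrm{End}(V)$, $f^*:A\to\mathrm{End}(V^* )$ is $\langle f^*(x)u^*,v\rangle=-\langle u^*,f(x)v\rangle$. For a bilinear form $\omega$, $\omega^\natural:A\to A^*$ is $\langle\omega^\natural(u),v\rangle=\omega(u,v)$. A Leibniz algebra is a vector space $A$ with a multiplication $\circ_A$ satisfying $x\circ_A(y\circ_A z)=(x\circ_A y)\circ_A z+y\circ_A(x\circ_A z)$. A representation of $(A,\circ_A)$ is a triple $(l,r,V)$ with linear maps $l,r:A\to\mathrm{End}(V)$ such that for all $x,y\in A,v\in V$: $l(x\circ_A y)v=l(x)l(y)v-l(y)l(x)v$; $r(x\circ_A y)v=l(x)r(y)v-r(y)l(x)v$; $r(y)l(x)v=-r(y)r(x)v$. Two representations $(l,r,V)$, $(l',r',V')$ are equivalent if there is a linear isomorphism $\phi:V\to V'$ with $\phi l(x)=l'(x)\phi$ and $\phi r(x)=r'(x)\phi$ for all $x$. A bilinear form $\omega$ on $(A,\circ_A)$ is a $2$-cocycle if $\omega(z,x\circ_A y)=\omega(x,y\circ_A z+z\circ_A y)-\omega(y,x\circ_A z)$ for all $x,y,z$. An anti-pre-Leibniz algebra is a vector space $A$ with multiplications $\succ_A,\prec_A$ such that, with $x\circ y=x\succ_A y+x\prec_A y$, for all $x,y,z$: (AL1) $(x\circ y)\prec_A z=x\succ_A(y\circ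 z)-y\succ_A(x\circ z)$; (AL2) $(x\circ y)\succ_A z=y\succ_A(x\succ_A z)-x\succ_A(y\succ_A z)$; (AL3) $x\prec_A(y\circ z)=(y\succ_A x)\prec_A z-y\succ_A(x\prec_A z)$; (AL4) $(x\succ_A y)\prec_A z=-(y\prec_A x)\prec_A z$. *)

From HB Require Import structures.
From mathcomp Require Import all_boot all_order all_algebra.
Set Implicit Arguments. Unset Strict Implicit. Unset Printing Implicit Defensive.
Import GRing.Theory.
Local Open Scope ring_scope.

(* Conventions: A is a finite-dimensional vector space over K, modelled as a
   [vectType K].  Its dual A^* is ['Hom(A, K^o)] (linear forms), with pairing
   <u*, v> := u* v. *)

Section Defs.
Variable K : fieldType.

Definition dual (V : vectType K) := 'Hom(V, K^o).

Definition Lmul (A : vectType K) (m : A -> A -> A) (x : A) : 'End(A) :=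
  linfun (m x).
Definition Rmul (A : vectType K) (m : A -> A -> A) (x : A) : 'End(A) :=
  linfun (fun y => m y x).

Definition dualrep (A V : vectType K) (f : A -> 'End(V)) (x : A)
  : 'End(dual V) :=
  linfun (fun u : dual V => - (u \o f x)%VF).

Definition bilinear_mul (A : vectType K) (m : A -> A -> A) :=
  (forall (a : K) x y z, m (a *: x + y) z = a *: m x z + m y z) /\
  (forall (a : K) x y z, m z (a *: x + y) = a *: m z x + m z y).

Definition bilinear_form (A : vectType K) (w : A -> A -> K) :=
  (forall (a : K) x y z, w (a *: x + y) z = a * w x z + w y z) /\
  (forall (a : K) x y z, w z (a *: x + y) = a * w z x + w z y).

Definition is_Leibniz (A : vectType K) (m : A -> A -> A) :=
  bilinear_mul m /\
  forall x y z, m x (m y z) = m (m x y) z + m y (m x z).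

Definition is_rep (A : vectType K) (m : A -> A -> A) (V : vectType K)
  (l r : A -> 'End(V)) :=
  linear l /\ linear r /\
  forall x y (v : V),
    [/\ l (m x y) v = l x (l y v) - l y (l x v),
        r (m x y) v = l x (r y v) - r y (l x v) &
        r y (l x v) = - r y (r x v)].

Definition equiv_via (A V V' : vectType K) (phi : 'Hom(V, V'))
  (l r : A -> 'End(V)) (l' r' : A -> 'End(V')) :=
  bijective phi /\
  forall x (v : V), phi (l x v) = l' x (phi v) /\ phi (r x v) = r' x (phi v).

Definition is_2cocycle (A : vectType K) (m : A -> A -> A) (w : A -> A -> K) :=
  forall x y z, w z (m x y) = w x (m y z + m z y) - w y (m x z).

Definition skew_symm_form (A : vectType K) (w : A -> A -> K) :=
  forall x y, w x y = - w y x.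

Definition nondeg_form (A : vectType K) (w : A -> A -> K) :=
  forall x, (forall y, w x y = 0) -> x = 0.

Definition natural (A : vectType K) (w : A -> A -> K) : 'Hom(A, dual A) :=
  linfun (fun u : A => (linfun (w u : A -> K^o) : dual A)).

(* (omega^natural)^* : A^** -> A^*, composed with the canonical
   identification A = A^**: v |-> (u |-> <omega^natural(u), v> = omega(u, v)) *)
Definition natural_dual (A : vectType K) (w : A -> A -> K) : 'Hom(A, dual A) :=
  linfun (fun v : A => (linfun ((fun u => w u v) : A -> K^o) : dual A)).

Definition anti_pre_Leibniz (A : vectType K) (succ prec : A -> A -> A) :=
  let circ x y := succ x y + prec x y in
  bilinear_mul succ /\ bilinear_mul prec /\
  forall x y z,
    [/\ prec (circ x y) z = succ x (circ y z) - succ y (circ x z),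
        succ (circ x y) z = succ y (succ x z) - succ x (succ y z),
        prec x (circ y z) = prec (succ y x) z - succ y (prec x z) &
        prec (succ x y) z = - prec (prec y x) z].

End Defs.

From HB Require Import structures.
From mathcomp Require Import all_boot all_order all_algebra.
From mathcomp Require Import ring.
Set Implicit Arguments. Unset Strict Implicit. Unset Printing Implicit Defensive.
Import GRing.Theory.
Local Open Scope ring_scope.

(* Nondegeneracy of ω makes ω♮ : A → A^* a linear isomorphism; it defines ≻ and ≺,
   and x ≻ y + x ≺ y = x ∘ y is then the cocycle identity.  By construction ω♮
   intertwines (-L≻, -R≺) with the dual of the adjoint representation, so (-L≻, -R≺)
   is a representation, and its three axioms are exactly (AL2)-(AL4); dualising it
   gives a representation equivalent to the adjoint one via (ω♮)^*.  Axiom (AL1)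
   amounts to
     ω(x∘y, z∘w + w∘z) = ω(x∘z, y∘w) - ω(y∘z, x∘w);
   expanding the left-hand side with the cocycle and Leibniz identities gives twice
   the right-hand side minus the left-hand side itself (the symmetrised products
   z∘w + w∘z are left annihilators), so 2 must be invertible. *)

Section LinearMaps.
Variable K : fieldType.

Lemma linfunE_linear (U V : vectType K) (g : U -> V) :
  linear g -> forall v, linfun g v = g v.
Proof.
move=> lg v.
pose gL : {linear U -> V} := HB.pack g (GRing.isLinear.Build K U V *:%R g lg).
exact: (lfunE gL v).
Qed.

Lemma dim_dual (V : vectType K) : dim (dual V) = dim V.
Proof. by have -> : dim (dual V) = (dim V * dim K^o)%N by []; rewrite muln1. Qed.

Lemma lfun_bij_of_inj (U V : vectType K) (f : 'Hom(U, V)) :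
  dim V = dim U -> injective f -> bijective f.
Proof.
move=> dimVU /lker0P kf; exists f^-1%VF; first exact: lker0_lfunK.
have imf : limg f = fullv.
  apply/eqP; rewrite eqEdim subvf limg_dim_eq ?(eqP kf) ?capv0 //.
  by rewrite /= !dimvf; apply: eq_leq.
by move=> v; rewrite limg_lfunVK // imf memvf.
Qed.

Lemma linear_oppf (U V : lmodType K) (f : U -> V) :
  linear f -> linear (fun x => - f x).
Proof. by move=> lf a x y; rewrite lf opprD scalerN. Qed.

Lemma linear_addf (U V : lmodType K) (f g : U -> V) :
  linear f -> linear g -> linear (fun x => f x + g x).
Proof. by move=> lf lg a x y; rewrite lf lg scalerDr addrACA. Qed.

End LinearMaps.

Section Bilinear.
Variables (K : fieldType) (A : vectType K).

Section BilinearMul.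
Variables (m : A -> A -> A) (m_bil : bilinear_mul m).

Lemma bimulDl x y z : m (x + y) z = m x z + m y z.
Proof. by have := m_bil.1 1 x y z; rewrite !scale1r. Qed.

Lemma bimulDr x y z : m z (x + y) = m z x + m z y.
Proof. by have := m_bil.2 1 x y z; rewrite !scale1r. Qed.

Lemma bimul0l z : m 0 z = 0.
Proof. by apply: (addrI (m 0 z)); rewrite -bimulDl !addr0. Qed.

Lemma bimul0r z : m z 0 = 0.
Proof. by apply: (addrI (m z 0)); rewrite -bimulDr !addr0. Qed.

Lemma bimulZl a x z : m (a *: x) z = a *: m x z.
Proof. by have := m_bil.1 a x 0 z; rewrite !addr0 bimul0l addr0. Qed.

Lemma bimulZr a x z : m z (a *: x) = a *: m z x.
Proof. by have := m_bil.2 a x 0 z; rewrite !addr0 bimul0r addr0. Qed.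

Lemma bimulNl x z : m (- x) z = - m x z.
Proof. by rewrite -scaleN1r bimulZl scaleN1r. Qed.

Lemma bimulNr x z : m z (- x) = - m z x.
Proof. by rewrite -scaleN1r bimulZr scaleN1r. Qed.

Lemma LmulE x v : Lmul m x v = m x v.
Proof. by rewrite /Lmul linfunE_linear // => a y z; exact: m_bil.2. Qed.

Lemma RmulE x v : Rmul m x v = m v x.
Proof. by rewrite /Rmul linfunE_linear // => a y z; exact: m_bil.1. Qed.

Lemma Lmul_linear : linear (Lmul m).
Proof.
by move=> a x y; apply/lfunP => v; rewrite add_lfunE scale_lfunE !LmulE m_bil.1.
Qed.

Lemma Rmul_linear : linear (Rmul m).
Proof.
by move=> a x y; apply/lfunP => v; rewrite add_lfunE scale_lfunE !RmulE m_bil.2.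
Qed.

End BilinearMul.

Section BilinearForm.
Variables (w : A -> A -> K) (w_bil : bilinear_form w).

Lemma biformDl x y z : w (x + y) z = w x z + w y z.
Proof. by have := w_bil.1 1 x y z; rewrite scale1r mul1r. Qed.

Lemma biformDr x y z : w z (x + y) = w z x + w z y.
Proof. by have := w_bil.2 1 x y z; rewrite scale1r mul1r. Qed.

Lemma biform0l z : w 0 z = 0.
Proof. by apply: (addrI (w 0 z)); rewrite -biformDl !addr0. Qed.

Lemma biform0r z : w z 0 = 0.
Proof. by apply: (addrI (w z 0)); rewrite -biformDr !addr0. Qed.

Lemma biformZl a x z : w (a *: x) z = a * w x z.
Proof. by have := w_bil.1 a x 0 z; rewrite !addr0 biform0l addr0. Qed.

Lemma biformZr a x z : w z (a *: x) = a * w z x.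
Proof. by have := w_bil.2 a x 0 z; rewrite !addr0 biform0r addr0. Qed.

Lemma biformNl x z : w (- x) z = - w x z.
Proof. by rewrite -scaleN1r biformZl mulN1r. Qed.

Lemma biformNr x z : w z (- x) = - w z x.
Proof. by rewrite -scaleN1r biformZr mulN1r. Qed.

End BilinearForm.
End Bilinear.

Section Representations.
Variables (K : fieldType) (A : vectType K) (m : A -> A -> A).

Lemma dualrepE (V : vectType K) (f : A -> 'End(V)) x (u : dual V) v :
  dualrep f x u v = - u (f x v).
Proof.
rewrite /dualrep linfunE_linear ?opp_lfunE ?comp_lfunE // => a u1 u2.
apply/lfunP => w.
by rewrite !(add_lfunE, scale_lfunE, opp_lfunE, comp_lfunE) scalerN opprD.
Qed.

Lemma dualrepN (V : vectType K) (f : A -> 'End(V)) x :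
  dualrep (fun y => - f y) x = - dualrep f x.
Proof.
by apply/lfunP => u; apply/lfunP => v; rewrite !(opp_lfunE, dualrepE) linearN.
Qed.

Lemma dualrep_linear (V : vectType K) (f : A -> 'End(V)) :
  linear f -> linear (dualrep f).
Proof.
move=> lf a x y; apply/lfunP => u; apply/lfunP => v.
rewrite !(add_lfunE, scale_lfunE, dualrepE) lf add_lfunE scale_lfunE.
by rewrite linearD linearZ opprD -scalerN.
Qed.

Lemma is_rep_eq (V : vectType K) (l r l' r' : A -> 'End(V)) :
  l =1 l' -> r =1 r' -> is_rep m l r -> is_rep m l' r'.
Proof.
move=> El Er [ll [lr hrep]]; split; [|split].
- by move=> a x y; rewrite -!El ll.
- by move=> a x y; rewrite -!Er lr.
- by move=> x y v; rewrite -!El -!Er.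
Qed.

Lemma dual_rep (V : vectType K) (l r : A -> 'End(V)) :
  is_rep m l r -> is_rep m (dualrep l) (fun x => - dualrep l x - dualrep r x).
Proof.
move=> [ll [lr hrep]]; split; [|split].
- exact: dualrep_linear.
- by apply: (@linear_addf _ _ _ (fun x => - dualrep l x) (fun x => - dualrep r x));
    apply: linear_oppf; exact: dualrep_linear.
move=> x y u.
have uB a b : u (a - b) = u a - u b by exact: linearB.
have uN a : u (- a) = - u a by exact: linearN.
split; apply/lfunP => v; rewrite !(add_lfunE, opp_lfunE, dualrepE);
  have [h1 h2 _] := hrep x y v; have [_ _ h3] := hrep y x v.
- by rewrite h1 uB; ring.
- by rewrite h1 h2 !uB; ring.
- by rewrite h3 uN; ring.
Qed.

Lemma equiv_rep (V W : vectType K) (phi : 'Hom(V, W))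
    (l r : A -> 'End(V)) (l' r' : A -> 'End(W)) :
  equiv_via phi l r l' r' -> linear l -> linear r -> is_rep m l' r' ->
  is_rep m l r.
Proof.
move=> [[phi_inv phiK _] hphi] ll lr [_ [_ hrep]]; split; [|split] => //.
have phil x v : phi (l x v) = l' x (phi v) by have [] := hphi x v.
have phir x v : phi (r x v) = r' x (phi v) by have [] := hphi x v.
have phiB a b : phi (a - b) = phi a - phi b by exact: linearB.
have phiN a : phi (- a) = - phi a by exact: linearN.
move=> x y v; have [h1 h2 h3] := hrep x y (phi v).
by split; apply: (can_inj phiK); rewrite ?phiB ?phiN !(phil, phir).
Qed.

Section Leibniz.
Hypothesis m_Leibniz : is_Leibniz m.

Lemma Leibniz_mull x y z : m (m x y) z = m x (m y z) - m y (m x z).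
Proof. by rewrite m_Leibniz.2 addrK. Qed.

Lemma Leibniz_mul_swap x y z : m (m y x) z = - m (m x y) z.
Proof. by rewrite !Leibniz_mull opprB. Qed.

Lemma adjoint_rep : is_rep m (Lmul m) (Rmul m).
Proof.
have m_bil := m_Leibniz.1.
split; [exact: Lmul_linear | split; [exact: Rmul_linear|]].
move=> x y v; rewrite !(LmulE m_bil, RmulE m_bil); split.
- exact: Leibniz_mull.
- by rewrite (m_Leibniz.2 x v y) addrAC subrr add0r.
- exact: Leibniz_mul_swap.
Qed.

End Leibniz.
End Representations.

Section SkewSymmetricCocycle.
Variables (K : fieldType) (A : vectType K) (circ : A -> A -> A) (omega : A -> A -> K).
Hypotheses (circ_Leibniz : is_Leibniz circ) (omega_bil : bilinear_form omega)
  (omega_skew : skew_symm_form omega) (omega_nondeg : nondeg_form omega)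
  (omega_cocycle : is_2cocycle circ omega) (two_neq0 : (2%:R : K) != 0).

Let circ_bil := circ_Leibniz.1.
Let circE := (bimulDl circ_bil, bimulDr circ_bil, bimulNl circ_bil, bimulNr circ_bil,
  bimulZl circ_bil, bimulZr circ_bil).
Let omegaE := (biformDl omega_bil, biformDr omega_bil, biformNl omega_bil,
  biformNr omega_bil, biformZl omega_bil, biformZr omega_bil).

Lemma omega_inj_l a b : (forall z, omega a z = omega b z) -> a = b.
Proof.
move=> eq_ab; apply/eqP; rewrite -subr_eq0; apply/eqP; apply: omega_nondeg => z.
by rewrite !omegaE eq_ab subrr.
Qed.

Lemma natural_omegaE u z : natural omega u z = omega u z.
Proof.
have lin_r v : linear (omega v : A -> K^o) by move=> a x y; exact: omega_bil.2.
rewrite /natural !linfunE_linear // => a x y.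
by apply/lfunP => v; rewrite add_lfunE scale_lfunE !linfunE_linear // omega_bil.1.
Qed.

Lemma natural_dualE v u : natural_dual omega v u = omega u v.
Proof.
have lin_l z : linear ((fun x => omega x z) : A -> K^o).
  by move=> a x y; exact: omega_bil.1.
rewrite /natural_dual !linfunE_linear // => a x y.
by apply/lfunP => z; rewrite add_lfunE scale_lfunE !linfunE_linear // omega_bil.2.
Qed.

Lemma natural_bij : bijective (natural omega).
Proof.
apply: lfun_bij_of_inj; first exact: dim_dual.
by move=> u v eq_uv; apply: omega_inj_l => z; rewrite -!natural_omegaE eq_uv.
Qed.

Lemma natural_dual_bij : bijective (natural_dual omega).
Proof.
apply: lfun_bij_of_inj; first exact: dim_dual.
move=> u v eq_uv; apply: omega_inj_l => z.
by rewrite omega_skew [RHS]omega_skew -!natural_dualE eq_uv.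
Qed.

Lemma exists_succ_prec : exists succ prec : A -> A -> A,
  (forall x y z, omega (succ x y) z = omega y (circ x z)) /\
  (forall x y z, omega (prec x y) z = - omega x (circ y z + circ z y)).
Proof.
have [natV _ natVK] := natural_bij.
have natVE (g : dual A) z : omega (natV g) z = g z by rewrite -natural_omegaE natVK.
exists (fun x y => natV (linfun (fun z => omega y (circ x z) : K^o))).
exists (fun x y => natV (linfun (fun z => - omega x (circ y z + circ z y) : K^o))).
split=> x y z; rewrite natVE linfunE_linear // => a u v; rewrite !(circE, omegaE) //.
by rewrite /GRing.scale /=; ring.
Qed.

Lemma omega_cocycle_sym x a b :
  omega a (circ x b) + omega b (circ x a) = omega x (circ a b + circ b a).
Proof. by rewrite (omega_cocycle x a b) addrC subrK. Qed.

Lemma circ_sym_l a b c : circ (circ a b + circ b a) c = 0.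
Proof. by rewrite circE Leibniz_mul_swap // addNr. Qed.

Lemma circ_sym_derivation y a b :
  circ y (circ a b + circ b a) =
  circ (circ y a) b + circ b (circ y a) + (circ (circ y b) a + circ a (circ y b)).
Proof.
rewrite circE (circ_Leibniz.2 y a b) (circ_Leibniz.2 y b a).
by rewrite addrACA [RHS]addrACA [circ a _ + _]addrC.
Qed.

Lemma omega_circ_sym x y z w :
  omega (circ x y) (circ z w + circ w z) =
  omega (circ x z) (circ y w) - omega (circ y z) (circ x w).
Proof.
have cocycle_sym_part :
    omega x (circ y (circ z w + circ w z)) - omega y (circ x (circ z w + circ w z)) =
    - omega (circ x y) (circ z w + circ w z).
  rewrite (omega_skew (circ x y)) opprK (omega_cocycle x y (circ z w + circ w z)).
  by rewrite circ_sym_l addr0.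
have expand : omega (circ x y) (circ z w + circ w z) =
    omega x (circ y (circ z w + circ w z)) - omega y (circ x (circ z w + circ w z)) +
    2 * (omega (circ x z) (circ y w) - omega (circ y z) (circ x w)).
  rewrite -omega_cocycle_sym !Leibniz_mull // !omegaE.
  rewrite (omega_cocycle x (circ y z) w) (omega_cocycle y (circ x z) w).
  rewrite (omega_cocycle x (circ y w) z) (omega_cocycle y (circ x w) z).
  rewrite !circ_sym_derivation (omega_skew (circ y w)) (omega_skew (circ x w)) !omegaE.
  ring.
apply: (mulfI two_neq0); rewrite mulr_natl mulr2n {1}expand cocycle_sym_part; ring.
Qed.

Section SuccPrec.
Variables succ prec : A -> A -> A.
Hypotheses (succ_def : forall x y z, omega (succ x y) z = omega y (circ x z))
  (prec_def : forall x y z, omega (prec x y) z = - omega x (circ y z + circ z y)).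

Lemma succ_add_prec x y : succ x y + prec x y = circ x y.
Proof.
apply: omega_inj_l => z; rewrite biformDl // succ_def prec_def.
by rewrite (omega_skew (circ x y)) (omega_cocycle x y z) opprB addrC.
Qed.

Lemma succ_bil : bilinear_mul succ.
Proof.
by split=> a x y z; apply: omega_inj_l => w; rewrite !(omegaE, succ_def, circE).
Qed.

Lemma prec_bil : bilinear_mul prec.
Proof.
by split=> a x y z; apply: omega_inj_l => w; rewrite !(omegaE, prec_def, circE); ring.
Qed.

Lemma natural_equiv :
  equiv_via (natural omega)
    (fun x => - Lmul succ x) (fun x => - Rmul prec x)
    (dualrep (Lmul circ)) (fun x => - dualrep (Lmul circ) x - dualrep (Rmul circ) x).
Proof.
split=> [|x v]; first exact: natural_bij.
split; apply/lfunP => z; rewrite !(add_lfunE, opp_lfunE, dualrepE, natural_omegaE).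
  by rewrite (LmulE succ_bil) (LmulE circ_bil) biformNl // succ_def.
rewrite (RmulE prec_bil) (LmulE circ_bil) (RmulE circ_bil) biformNl // prec_def.
by rewrite biformDr // !opprK.
Qed.

Lemma natural_dual_equiv :
  equiv_via (natural_dual omega) (Lmul circ) (Rmul circ)
    (fun x => - dualrep (Lmul succ) x)
    (fun x => dualrep (Lmul succ) x + dualrep (Rmul prec) x).
Proof.
split=> [|x v]; first exact: natural_dual_bij.
split; apply/lfunP => u; rewrite !(add_lfunE, opp_lfunE, dualrepE, natural_dualE).
  by rewrite (LmulE circ_bil) (LmulE succ_bil) opprK succ_def.
rewrite (RmulE circ_bil) (LmulE succ_bil) (RmulE prec_bil) succ_def prec_def.
by rewrite opprK biformDr // addKr.
Qed.

Lemma succ_prec_rep :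
  is_rep circ (fun x => - Lmul succ x) (fun x => - Rmul prec x).
Proof.
apply: equiv_rep natural_equiv _ _ (dual_rep (adjoint_rep circ_Leibniz)).
  exact/linear_oppf/Lmul_linear/succ_bil.
exact/linear_oppf/Rmul_linear/prec_bil.
Qed.

Lemma dual_succ_prec_rep :
  is_rep circ (fun x => - dualrep (Lmul succ) x)
    (fun x => dualrep (Lmul succ) x + dualrep (Rmul prec) x).
Proof.
by apply: is_rep_eq (dual_rep succ_prec_rep) => x; rewrite !dualrepN ?opprK.
Qed.

Lemma succ_prec_anti_pre_Leibniz : anti_pre_Leibniz succ prec.
Proof.
have [_ [_ rep]] := succ_prec_rep.
have succN x y : succ x (- y) = - succ x y := bimulNr succ_bil y x.
split; [exact: succ_bil | split; [exact: prec_bil | move=> x y z]].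
rewrite !succ_add_prec; split.
- apply: omega_inj_l => w; rewrite biformDl // biformNl // prec_def !succ_def.
  by rewrite omega_circ_sym // opprB.
- have [+ _ _] := rep x y z; rewrite !opp_lfunE !(LmulE succ_bil) !succN !opprK.
  by move/(canRL (@opprK _)); rewrite opprB.
- have [_ + _] := rep y z x.
  rewrite !opp_lfunE !(LmulE succ_bil) !(RmulE prec_bil) succN (bimulNl prec_bil).
  by rewrite !opprK => /(canRL (@opprK _)); rewrite opprB.
- have [_ _] := rep x z y.
  by rewrite !opp_lfunE !(LmulE succ_bil) !(RmulE prec_bil) !(bimulNl prec_bil) !opprK.
Qed.

End SuccPrec.
End SkewSymmetricCocycle.

Theorem theorem2p15 (K : fieldType) (Kchar0 : [pchar K] =i pred0)
  (A : vectType K) (circ : A -> A -> A) (omega : A -> A -> K) :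
  is_Leibniz circ ->
  bilinear_form omega -> skew_symm_form omega -> nondeg_form omega ->
  is_2cocycle circ omega ->
  (exists succ prec : A -> A -> A,
     (forall x y z, omega (succ x y) z = omega y (circ x z)) /\
     (forall x y z, omega (prec x y) z = - omega x (circ y z + circ z y))) /\
  (forall succ prec : A -> A -> A,
     (forall x y z, omega (succ x y) z = omega y (circ x z)) ->
     (forall x y z, omega (prec x y) z = - omega x (circ y z + circ z y)) ->
     anti_pre_Leibniz succ prec /\
         (forall x y, succ x y + prec x y = circ x y) /\
         is_rep circ (fun x => - Lmul succ x) (fun x => - Rmul prec x) /\
         is_rep circ (dualrep (Lmul circ))
                     (fun x => - dualrep (Lmul circ) x - dualrep (Rmul circ) x) /\
         equiv_via (natural omega)
                   (fun x => - Lmul succ x) (fun x => - Rmul prec x)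
                   (dualrep (Lmul circ))
                   (fun x => - dualrep (Lmul circ) x - dualrep (Rmul circ) x) /\
         is_rep circ (Lmul circ) (Rmul circ) /\
         is_rep circ (fun x => - dualrep (Lmul succ) x)
                     (fun x => dualrep (Lmul succ) x + dualrep (Rmul prec) x) /\
         equiv_via (natural_dual omega)
                   (Lmul circ) (Rmul circ)
                   (fun x => - dualrep (Lmul succ) x)
                   (fun x => dualrep (Lmul succ) x + dualrep (Rmul prec) x)).
Proof.
move=> circ_Leibniz omega_bil omega_skew omega_nondeg omega_cocycle.
have two_neq0 : (2%:R : K) != 0.
  by rewrite natf_neq0_pchar; apply/andP; split=> //=; rewrite inE /= Kchar0.
split; first exact: exists_succ_prec.
move=> succ prec succ_def prec_def.
split; first exact: (succ_prec_anti_pre_Leibniz (circ := circ) (omega := omega)).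
split; first exact: (succ_add_prec (omega := omega)).
split; first exact: (succ_prec_rep (omega := omega)).
split; first exact/dual_rep/adjoint_rep.
split; first exact: natural_equiv.
split; first exact: adjoint_rep.
split; first exact: (dual_succ_prec_rep (omega := omega)).
exact: natural_dual_equiv.
Qed.
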